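(* Let $f:\mathbb{R}\to\mathbb{R}$ be a Topologically Anosov homeomorphism. Then $f$ has exactly one fixed point.
   Context: A homeomorphism $f:\mathbb{R}\to\mathbb{R}$ is Topologically Anosov if: (i) there is a continuous strictly positive $\epsilon:\mathbb{R}\to\mathbb{R}$ such that for all $x\neq y$ there is $k\in\mathbb{Z}$ with $|f^k(x)-f^k(y)|>\epsilon(f^k(x))$; and (ii) for every continuous strictly positive $\epsilon:\mathbb{R}\to\mathbb{R}$ there is a continuous strictly positive $\delta:\mathbb{R}\to\mathbb{R}$ such that every $\delta$-pseudo-orbit (a sequence $(x_n)_{n\in\mathbb{Z}}$ with $|f(x_n)-x_{n+1}|<\delta(f(x_n))$) is $\epsilon$-shadowed by an orbit (there is $x$ with $|x_n-f^n(x)|<\epsilon(x_n)$ for all $n$). *)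

From Stdlib Require Import Reals ZArith.
Open Scope R_scope.

Definition homeo_with_inverse (f g : R -> R) : Prop :=
  continuity f /\ continuity g /\
  (forall x, g (f x) = x) /\ (forall x, f (g x) = x).

Definition iterZ (f g : R -> R) (k : Z) (x : R) : R :=
  match k with
  | Z0 => x
  | Zpos p => Nat.iter (Pos.to_nat p) f x
  | Zneg p => Nat.iter (Pos.to_nat p) g x
  end.

Definition pos_cont_fun (e : R -> R) : Prop :=
  continuity e /\ forall x, 0 < e x.

Definition expansive_TA (f g : R -> R) : Prop :=
  exists eps : R -> R, pos_cont_fun eps /\
    forall x y, x <> y -> exists k : Z,
      Rabs (iterZ f g k x - iterZ f g k y) > eps (iterZ f g k x).

Definition shadowing_TA (f g : R -> R) : Prop :=
  forall eps : R -> R, pos_cont_fun eps ->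
    exists delta : R -> R, pos_cont_fun delta /\
      forall xs : Z -> R,
        (forall n : Z, Rabs (f (xs n) - xs (n + 1)%Z) < delta (f (xs n))) ->
        exists x : R, forall n : Z, Rabs (xs n - iterZ f g n x) < eps (xs n).

Definition topologically_anosov (f g : R -> R) : Prop :=
  expansive_TA f g /\ shadowing_TA f g.

(** If f had no fixed point, every orbit would escape to infinity in both time
    directions, so one can choose a continuous positive [eps] so small along the
    orbit of [0] that any point whose orbit [eps]-follows it at arbitrarily large
    times must be [0] itself.  Following the orbit of [0] in the past and that of
    a point [b] close to [f 0] in the future (and the other way round) gives two
    pseudo-orbits; both shadowing points are then [0], so the orbits of [b] and
    [f 0] stay [eps]-close forever, against expansivity.

    If [p < q] were fixed, [f] would be increasing, so every orbit in [[p, q]] is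
    monotone and bounded, and its steps become small at large times.  A point [y]
    between a non-fixed [x] and [f x] has its orbit squeezed between those of [x]
    and [f x] at large times, and close to that of [x] at small times, against
    expansivity; hence [[p, q]] consists of fixed points, which again contradicts
    expansivity. *)

From Stdlib Require Import Reals ZArith Lra Lia ClassicalEpsilon Classical.
Open Scope R_scope.

Lemma continuity_pt_eps_delta h x : continuity_pt h x -> forall e, 0 < e ->
  exists d, 0 < d /\ forall y, Rabs (y - x) < d -> Rabs (h y - h x) < e.
Proof.
  intros Hh e He. destruct (Hh e He) as [d [Hd Hy]]. exists d. split; [lra|].
  intros y Hyx. destruct (Req_dec y x) as [->|Hne].
  - rewrite Rminus_diag, Rabs_R0. lra.
  - apply (Hy y). split; [split; [exact I| auto]| exact Hyx].
Qed.

Lemma lipschitz1_continuity h :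
  (forall x y, Rabs (h y - h x) <= Rabs (y - x)) -> continuity h.
Proof.
  intros Hh x e He. exists e. split; [lra|].
  intros y [_ Hy]. simpl in *. unfold Rdist in *. eapply Rle_lt_trans; [apply Hh| exact Hy].
Qed.

Lemma Rmin_lipschitz a b c d :
  Rabs (Rmin a b - Rmin c d) <= Rmax (Rabs (a - c)) (Rabs (b - d)).
Proof.
  apply Rabs_le.
  pose proof (Rmax_l (Rabs (a - c)) (Rabs (b - d))).
  pose proof (Rmax_r (Rabs (a - c)) (Rabs (b - d))).
  pose proof (Rle_abs (a - c)). pose proof (Rle_abs (- (a - c))).
  pose proof (Rle_abs (b - d)). pose proof (Rle_abs (- (b - d))).
  rewrite !Rabs_Ropp in *.
  unfold Rmin. repeat destruct Rle_dec; lra.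
Qed.

Lemma continuity_Rmin h1 h2 :
  continuity h1 -> continuity h2 -> continuity (fun x => Rmin (h1 x) (h2 x)).
Proof.
  intros H1 H2 x e He.
  destruct (continuity_pt_eps_delta _ _ (H1 x) e He) as [d1 [Hd1 Hnear1]].
  destruct (continuity_pt_eps_delta _ _ (H2 x) e He) as [d2 [Hd2 Hnear2]].
  exists (Rmin d1 d2). split; [apply Rmin_pos; auto|].
  intros y [_ Hy]. simpl in *. unfold Rdist in *.
  pose proof (Rmin_l d1 d2). pose proof (Rmin_r d1 d2).
  eapply Rle_lt_trans; [apply Rmin_lipschitz|].
  apply Rmax_lub_lt; [apply Hnear1| apply Hnear2]; lra.
Qed.

Lemma eq_of_dist_lt_inv_succ x y : (forall k : nat, Rabs (x - y) < / (INR k + 1)) -> x = y.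
Proof.
  intro Hsmall. apply NNPP. intro Hxy.
  assert (Hpos : 0 < Rabs (x - y)) by (apply Rabs_pos_lt; lra).
  destruct (archimed_cor1 (Rabs (x - y)) Hpos) as [N [HN HN0]].
  specialize (Hsmall N). assert (0 < INR N) by (apply lt_0_INR; lia).
  assert (/ (INR N + 1) < / INR N) by (apply Rinv_lt_contravar; nra). lra.
Qed.

Lemma exists_small_fraction a d : 0 < d -> exists s, 0 < s < 1 /\ Rabs (s * a) < d.
Proof.
  intro Hd. pose proof (Rabs_pos a) as Ha.
  set (s := d / (2 * (Rabs a + d))).
  assert (Hs : s * (Rabs a + d) = d / 2) by (unfold s; field; lra).
  assert (Hs0 : 0 < s) by (unfold s; apply Rdiv_lt_0_compat; lra).
  exists s. rewrite Rabs_mult, (Rabs_pos_eq s) by lra. split; [split|]; nra.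
Qed.

Lemma exists_near_point_within delta y : pos_cont_fun delta ->
  exists b, b <> y /\ Rabs (b - y) < delta y /\ Rabs (b - y) < delta b.
Proof.
  intros [Hcont Hpos].
  assert (Hhalf : 0 < delta y / 2) by (specialize (Hpos y); lra).
  destruct (continuity_pt_eps_delta _ _ (Hcont y) _ Hhalf) as [r [Hr Hnear]].
  set (t := Rmin r (delta y) / 2).
  assert (Ht : 0 < t) by (apply Rdiv_lt_0_compat; [apply Rmin_pos; auto| lra]).
  pose proof (Rmin_l r (delta y)). pose proof (Rmin_r r (delta y)).
  exists (y + t). replace (y + t - y) with t by ring. rewrite Rabs_pos_eq by lra.
  specialize (Hnear (y + t)). replace (y + t - y) with t in Hnear by ring.
  rewrite Rabs_pos_eq in Hnear by lra. specialize (Hnear ltac:(unfold t; lra)).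
  apply Rabs_def2 in Hnear. unfold t in *. lra.
Qed.

(** * Monotone maps of the line *)

Lemma strict_increasing_le h x y : strict_increasing h -> x <= y -> h x <= h y.
Proof. intros Hh [Hxy| ->]; [apply Rlt_le, Hh; auto| lra]. Qed.

Lemma Nat_iter_strict_increasing h n :
  strict_increasing h -> strict_increasing (fun x => Nat.iter n h x).
Proof. intros Hh. induction n; intros x y Hxy; simpl; auto. Qed.

Lemma strict_increasing_inverse h k :
  strict_increasing h -> (forall x, h (k x) = x) -> strict_increasing k.
Proof.
  intros Hh Hhk x y Hxy. apply Rnot_le_lt. intro Hle.
  apply (strict_increasing_le h) in Hle; [|exact Hh]. rewrite !Hhk in Hle. lra.
Qed.

(* The path [s |-> ((1-s)*1 + s*y, (1-s)*0 + s*x)] joins [(1,0)] to [(y,x)]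
   inside [{(u,v) | v < u}]; if [h] reversed the order of [x < y], the IVT
   would give [h u = h v] with [u <> v] on it. *)
Lemma continuous_injective_increasing h : continuity h ->
  (forall x y, h x = h y -> x = y) -> h 0 < h 1 -> strict_increasing h.
Proof.
  intros Hc Hinj H01 x y Hxy. apply Rnot_le_lt. intro Hyx.
  set (H := fun s => h ((1 - s) * 1 + s * y) - h ((1 - s) * 0 + s * x)).
  assert (HH : continuity H) by (unfold H; reg).
  destruct (IVT_cor H 0 1 HH ltac:(lra)) as [s [Hs Hs0]].
  { unfold H; cbv beta. replace ((1 - 0) * 1 + 0 * y) with 1 by ring.
    replace ((1 - 0) * 0 + 0 * x) with 0 by ring.
    replace ((1 - 1) * 1 + 1 * y) with y by ring.
    replace ((1 - 1) * 0 + 1 * x) with x by ring. nra. }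
  unfold H in Hs0. apply Rminus_diag_uniq, Hinj in Hs0.
  assert (Hs1 : s = 1) by nra. subst s. lra.
Qed.

Lemma continuous_injective_monotone h : continuity h ->
  (forall x y, h x = h y -> x = y) -> strict_increasing h \/ strict_decreasing h.
Proof.
  intros Hc Hinj. destruct (Rlt_or_le (h 0) (h 1)) as [H01|H10].
  - left. apply continuous_injective_increasing; assumption.
  - right. assert (Hne : h 0 <> h 1) by (intro E; apply Hinj in E; lra).
    intros x y Hxy.
    enough (Hopp : strict_increasing (fun x => - h x)) by (specialize (Hopp x y Hxy); lra).
    apply continuous_injective_increasing; [reg| intros u v E; apply Hinj; lra| lra].
Qed.

Lemma strict_increasing_bounded_iter_cauchy h x lo hi : strict_increasing h ->
  (forall j, lo <= Nat.iter j h x <= hi) -> Cauchy_crit (fun j => Nat.iter j h x).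
Proof.
  intros Hh Hbound. apply CV_Cauchy. destruct (Rle_dec x (h x)) as [Hx|Hx].
  - apply growing_cv.
    + intro n. induction n as [|n IH]; [exact Hx|].
      simpl. apply strict_increasing_le; assumption.
    + exists hi. intros z [i ->]. apply Hbound.
  - apply decreasing_cv.
    + intro n. induction n as [|n IH]; [simpl; lra|].
      simpl. apply strict_increasing_le; assumption.
    + exists (- lo). intros z [i ->]. unfold opp_seq. specialize (Hbound i). lra.
Qed.

Lemma strict_increasing_image_closer F x s w : strict_increasing F ->
  x <> w -> 0 < s < 1 -> Rabs (F (x + s * (w - x)) - F x) < Rabs (F w - F x).
Proof.
  intros HF Hxw Hs. destruct (Rlt_or_le x w) as [H|H].
  - assert (F x < F (x + s * (w - x))) by (apply HF; nra).
    assert (F (x + s * (w - x)) < F w) by (apply HF; nra).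
    rewrite !Rabs_pos_eq by lra. lra.
  - assert (F (x + s * (w - x)) < F x) by (apply HF; nra).
    assert (F w < F (x + s * (w - x))) by (apply HF; nra).
    rewrite !Rabs_left by lra. lra.
Qed.

(** * Orbits of fixed-point-free maps *)

Lemma continuity_Nat_iter h n : continuity h -> continuity (fun x => Nat.iter n h x).
Proof.
  intro Hh. induction n as [|n IH]; simpl.
  - reg.
  - exact (continuity_comp _ h IH Hh).
Qed.

Lemma Nat_iter_opp_conj h n x :
  Nat.iter n (fun y => - h (- y)) x = - Nat.iter n h (- x).
Proof.
  induction n as [|n IH]; simpl.
  - ring.
  - rewrite IH, Ropp_involutive. reflexivity.
Qed.

Lemma no_fixpoint_sign h : continuity h -> (forall y, h y <> y) ->
  (forall y, y < h y) \/ (forall y, h y < y).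
Proof.
  intros Hc Hnofix.
  assert (Hk : continuity (fun x => h x - x)) by reg.
  assert (Hsame : forall y, 0 < (h 0 - 0) * (h y - y)).
  { intro y. apply Rnot_le_lt. intro Hle.
    destruct (Rle_dec 0 y) as [Hy|Hy].
    - destruct (IVT_cor _ 0 y Hk Hy Hle) as [w [_ Hw]]. apply (Hnofix w). lra.
    - rewrite Rmult_comm in Hle.
      destruct (IVT_cor _ y 0 Hk ltac:(lra) Hle) as [w [_ Hw]]. apply (Hnofix w). lra. }
  destruct (Rlt_or_le 0 (h 0)) as [H0|H0]; [left| right]; intro y; specialize (Hsame y); nra.
Qed.

Lemma Nat_iter_limit_fixed h x l :
  continuity h -> Un_cv (fun n => Nat.iter n h x) l -> h l = l.
Proof.
  intros Hc Hl. apply (UL_sequence (fun n => h (Nat.iter n h x))).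
  - exact (continuity_seq h _ l (Hc l) Hl).
  - intros e He. destruct (Hl e He) as [N HN]. exists N. intros n Hn.
    exact (HN (S n) ltac:(lia)).
Qed.

Lemma Nat_iter_tends_to_infinity h : continuity h -> (forall y, y < h y) ->
  forall x K, exists k, forall j, (k <= j)%nat -> K < Nat.iter j h x.
Proof.
  intros Hc Hup x K.
  assert (Hmono : forall j j', (j <= j')%nat -> Nat.iter j h x <= Nat.iter j' h x).
  { intros j j' Hj. induction Hj as [|j' _ IH]; [lra|].
    simpl. specialize (Hup (Nat.iter j' h x)). lra. }
  destruct (classic (exists k, K < Nat.iter k h x)) as [[k Hk]|Hbounded].
  - exists k. intros j Hj. specialize (Hmono k j Hj). lra.
  - exfalso. destruct (growing_cv (fun n => Nat.iter n h x)) as [l Hl].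
    + intro n. apply Rlt_le, Hup.
    + exists K. intros z [i ->]. apply Rnot_lt_le. intro Hi. apply Hbounded. exists i. exact Hi.
    + specialize (Hup l). rewrite (Nat_iter_limit_fixed h x l Hc Hl) in Hup. lra.
Qed.

Lemma Nat_iter_escape h : continuity h -> (forall y, h y <> y) ->
  forall x K, exists k, forall j, (k <= j)%nat -> K < Rabs (Nat.iter j h x).
Proof.
  intros Hc Hnofix x K.
  destruct (no_fixpoint_sign h Hc Hnofix) as [Hup|Hdown].
  - destruct (Nat_iter_tends_to_infinity h Hc Hup x K) as [k Hk].
    exists k. intros j Hj. specialize (Hk j Hj). pose proof (Rle_abs (Nat.iter j h x)). lra.
  - assert (Hup : forall y, y < - h (- y)) by (intro y; specialize (Hdown (- y)); lra).
    destruct (Nat_iter_tends_to_infinity (fun y => - h (- y)) ltac:(reg) Hup (- x) K)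
      as [k Hk].
    exists k. intros j Hj. specialize (Hk j Hj).
    rewrite Nat_iter_opp_conj, Ropp_involutive in Hk.
    pose proof (Rle_abs (- Nat.iter j h x)). rewrite Rabs_Ropp in *. lra.
Qed.

Definition escapes (u : Z -> R) : Prop :=
  forall K, exists N : nat, forall n, (Z.of_nat N < Z.abs n)%Z -> K < Rabs (u n).

(** * A continuous function small along an escaping sequence *)

Section ConeInfimum.
Variables (p e : Z -> R).
Hypothesis e_pos : forall n, 0 < e n.

Definition cone (n : Z) (z : R) : R := e n + Rabs (z - p n).

(* The cap [1] makes [cone_inf N z] independent of [N] as soon as all cones
   with [|n| > N] are [>= 1] at [z]. *)
Fixpoint cone_inf (N : nat) (z : R) : R :=
  match N with
  | O => Rmin 1 (cone 0 z)
  | S M => Rmin (cone_inf M z) (Rmin (cone (Z.of_nat N) z) (cone (- Z.of_nat N) z))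
  end.

Lemma cone_lipschitz n y z : Rabs (cone n y - cone n z) <= Rabs (y - z).
Proof.
  unfold cone. replace (e n + Rabs (y - p n) - (e n + Rabs (z - p n)))
    with (Rabs (y - p n) - Rabs (z - p n)) by ring.
  eapply Rle_trans; [apply Rabs_triang_inv2|]. right. f_equal. ring.
Qed.

Lemma cone_inf_lipschitz N y z : Rabs (cone_inf N y - cone_inf N z) <= Rabs (y - z).
Proof.
  induction N as [|N IH]; simpl; eapply Rle_trans; try apply Rmin_lipschitz;
    apply Rmax_lub.
  - rewrite Rminus_diag, Rabs_R0. apply Rabs_pos.
  - apply cone_lipschitz.
  - exact IH.
  - eapply Rle_trans; [apply Rmin_lipschitz|]. apply Rmax_lub; apply cone_lipschitz.
Qed.

Lemma cone_pos n z : 0 < cone n z.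
Proof. unfold cone. pose proof (e_pos n). pose proof (Rabs_pos (z - p n)). lra. Qed.

Lemma cone_inf_pos N z : 0 < cone_inf N z.
Proof.
  induction N; simpl; repeat apply Rmin_pos; auto using cone_pos; lra.
Qed.

Lemma cone_inf_le_1 N z : cone_inf N z <= 1.
Proof.
  induction N; simpl; [apply Rmin_l| eapply Rle_trans; [apply Rmin_l| assumption]].
Qed.

Lemma cone_inf_le_cone N z n : (Z.abs n <= Z.of_nat N)%Z -> cone_inf N z <= cone n z.
Proof.
  induction N as [|N IH]; intro Hn; simpl.
  - replace n with 0%Z by lia. apply Rmin_r.
  - destruct (Z.eq_dec (Z.abs n) (Z.of_nat (S N))) as [Heq|Hne].
    + eapply Rle_trans; [apply Rmin_r|].
      destruct (Z.abs_spec n) as [[_ Habs]|[_ Habs]].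
      * replace n with (Z.of_nat (S N)) by lia. apply Rmin_l.
      * replace n with (- Z.of_nat (S N))%Z by lia. apply Rmin_r.
    + eapply Rle_trans; [apply Rmin_l|]. apply IH. lia.
Qed.

Lemma cone_inf_stable N z :
  (forall n, (Z.of_nat N < Z.abs n)%Z -> 1 <= Rabs (z - p n)) ->
  forall N', (N <= N')%nat -> cone_inf N' z = cone_inf N z.
Proof.
  intros Hfar N' HN'. induction HN' as [|N' HN' IH]; [reflexivity|].
  assert (Hcone : forall n, (Z.of_nat N < Z.abs n)%Z -> 1 <= cone n z).
  { intros n Hn. specialize (Hfar n Hn). pose proof (e_pos n). unfold cone. lra. }
  simpl. rewrite IH, Rmin_left; [reflexivity|].
  pose proof (cone_inf_le_1 N z).
  apply Rmin_glb; eapply Rle_trans; try apply Hcone; (assumption || lia).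
Qed.

Hypothesis p_escapes : escapes p.

(* [phi] is the infimum of all the 1-Lipschitz cones, capped at [1]; near any
   point only finitely many cones matter, so it is positive and 1-Lipschitz. *)
Lemma exists_continuous_below_on_sequence :
  exists phi, continuity phi /\ (forall z, 0 < phi z) /\ (forall n, phi (p n) <= e n).
Proof.
  assert (Hfar : forall z, exists N : nat,
             forall n, (Z.of_nat N < Z.abs n)%Z -> 1 <= Rabs (z - p n)).
  { intro z. destruct (p_escapes (Rabs z + 1)) as [N HN]. exists N. intros n Hn.
    specialize (HN n Hn). pose proof (Rabs_triang_inv (p n) z).
    rewrite Rabs_minus_sym. lra. }
  destruct (choice _ Hfar) as [M HM].
  assert (Hstable : forall z N, (M z <= N)%nat -> cone_inf N z = cone_inf (M z) z)
    by (intros z N HN; exact (cone_inf_stable (M z) z (HM z) N HN)).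
  exists (fun z => cone_inf (M z) z). split; [|split].
  - apply lipschitz1_continuity. intros x y.
    rewrite <- (Hstable x (Nat.max (M x) (M y))), <- (Hstable y (Nat.max (M x) (M y)))
      by lia.
    apply cone_inf_lipschitz.
  - intro z. apply cone_inf_pos.
  - intro n. rewrite <- (Hstable (p n) (Nat.max (M (p n)) (Z.abs_nat n))) by lia.
    eapply Rle_trans; [apply (cone_inf_le_cone _ _ n); lia|].
    unfold cone. rewrite Rminus_diag, Rabs_R0. lra.
Qed.

End ConeInfimum.

(** * Orbits of a homeomorphism *)

Lemma Z_of_nat_or_opp (z : Z) : exists n, z = Z.of_nat n \/ z = (- Z.of_nat n)%Z.
Proof. exists (Z.abs_nat z). lia. Qed.

Section Homeomorphism.
Variables f g : R -> R.
Hypothesis gf : forall x, g (f x) = x.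
Hypothesis fg : forall x, f (g x) = x.
Hypothesis f_cont : continuity f.
Hypothesis g_cont : continuity g.

Lemma iterZ_of_nat n x : iterZ f g (Z.of_nat n) x = Nat.iter n f x.
Proof. destruct n; simpl; [reflexivity|]. rewrite SuccNat2Pos.id_succ. reflexivity. Qed.

Lemma iterZ_opp_of_nat n x : iterZ f g (- Z.of_nat n) x = Nat.iter n g x.
Proof. destruct n; simpl; [reflexivity|]. rewrite SuccNat2Pos.id_succ. reflexivity. Qed.

Lemma iterZ_succ z x : iterZ f g (z + 1) x = f (iterZ f g z x).
Proof.
  destruct (Z_of_nat_or_opp z) as [[|n] [-> | ->]]; try reflexivity.
  - replace (Z.of_nat (S n) + 1)%Z with (Z.of_nat (S (S n))) by lia.
    rewrite !iterZ_of_nat. reflexivity.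
  - replace (- Z.of_nat (S n) + 1)%Z with (- Z.of_nat n)%Z by lia.
    rewrite !iterZ_opp_of_nat. simpl. rewrite fg. reflexivity.
Qed.

Lemma iterZ_pred z x : iterZ f g (z - 1) x = g (iterZ f g z x).
Proof.
  replace z with ((z - 1) + 1)%Z at 2 by lia. rewrite iterZ_succ, gf. reflexivity.
Qed.

Lemma iterZ_add m n x : iterZ f g (m + n) x = iterZ f g m (iterZ f g n x).
Proof.
  induction m using Z.peano_ind; [reflexivity| |].
  - replace (Z.succ m + n)%Z with ((m + n) + 1)%Z by lia.
    unfold Z.succ. rewrite !iterZ_succ, IHm. reflexivity.
  - replace (Z.pred m + n)%Z with ((m + n) - 1)%Z by lia.
    rewrite <- Z.sub_1_r, !iterZ_pred, IHm. reflexivity.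
Qed.

Lemma iterZ_opp_cancel n x : iterZ f g (- n) (iterZ f g n x) = x.
Proof. rewrite <- iterZ_add. replace (- n + n)%Z with 0%Z by lia. reflexivity. Qed.

Lemma iterZ_fixed n x : f x = x -> iterZ f g n x = x.
Proof.
  intro Hx. induction n using Z.peano_ind; [reflexivity| |].
  - unfold Z.succ. rewrite iterZ_succ, IHn. exact Hx.
  - rewrite <- Z.sub_1_r, iterZ_pred, IHn, <- Hx at 1. apply gf.
Qed.

Lemma continuity_iterZ n : continuity (iterZ f g n).
Proof.
  destruct n; unfold iterZ; [reg| apply continuity_Nat_iter; assumption ..].
Qed.

Lemma orbit_escapes a : (forall y, f y <> y) -> escapes (fun n => iterZ f g n a).
Proof.
  intros Hnofix K.
  assert (Hgnofix : forall y, g y <> y)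
    by (intros y Hy; apply (Hnofix y); rewrite <- Hy at 1; apply fg).
  destruct (Nat_iter_escape f f_cont Hnofix a K) as [k1 H1].
  destruct (Nat_iter_escape g g_cont Hgnofix a K) as [k2 H2].
  exists (Nat.max k1 k2). intros n Hn.
  destruct (Z_of_nat_or_opp n) as [j [-> | ->]].
  - rewrite iterZ_of_nat. apply H1. lia.
  - rewrite iterZ_opp_of_nat. apply H2. lia.
Qed.

Definition pins (eps : R -> R) (a : R) : Prop :=
  forall x, (forall k : nat, exists n : Z, (Z.of_nat k <= Z.abs n)%Z /\
    Rabs (iterZ f g n a - iterZ f g n x) < eps (iterZ f g n a)) -> x = a.

(* [eps] is made so small at [f^n a] that [eps]-closeness there is pulled back
   by [f^-n] to [1/(|n|+1)]-closeness to [a]. *)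
Lemma exists_pinning_eps a c : escapes (fun n => iterZ f g n a) -> pos_cont_fun c ->
  exists eps, pos_cont_fun eps /\ (forall y, eps y <= c y) /\ pins eps a.
Proof.
  intros Hesc [Hc_cont Hc_pos].
  assert (Hpullback : forall n, exists r, 0 < r /\ forall w,
    Rabs (w - iterZ f g n a) < r -> Rabs (iterZ f g (- n) w - a) < / (INR (Z.abs_nat n) + 1)).
  { intro n. assert (Hpos : 0 < / (INR (Z.abs_nat n) + 1)).
    { apply Rinv_0_lt_compat. pose proof (pos_INR (Z.abs_nat n)). lra. }
    destruct (continuity_pt_eps_delta _ _ (continuity_iterZ (- n) (iterZ f g n a)) _ Hpos)
      as [r [Hr Hnear]].
    exists r. split; [exact Hr|]. intros w Hw. specialize (Hnear w Hw).
    rewrite iterZ_opp_cancel in Hnear. exact Hnear. }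
  destruct (choice _ Hpullback) as [E HE].
  destruct (exists_continuous_below_on_sequence (fun n => iterZ f g n a) E
              (fun n => proj1 (HE n)) Hesc) as [phi [Hphi_cont [Hphi_pos Hphi_le]]].
  exists (fun y => Rmin (c y) (phi y)). split; [split|split].
  - apply continuity_Rmin; assumption.
  - intro y. apply Rmin_pos; auto.
  - intro y. apply Rmin_l.
  - intros x Hclose. apply eq_of_dist_lt_inv_succ. intro k.
    destruct (Hclose k) as [n [Hkn Hn]].
    assert (Hn' : Rabs (iterZ f g n x - iterZ f g n a) < E n).
    { rewrite Rabs_minus_sym. eapply Rlt_le_trans; [exact Hn|].
      eapply Rle_trans; [apply Rmin_r| apply Hphi_le]. }
    pose proof (proj2 (HE n) _ Hn') as Hx. rewrite iterZ_opp_cancel in Hx.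
    eapply Rlt_le_trans; [exact Hx|]. apply Rinv_le_contravar.
    + pose proof (pos_INR k). lra.
    + assert (Hle : (k <= Z.abs_nat n)%nat) by lia. apply le_INR in Hle. lra.
Qed.

Definition is_orbit (u : Z -> R) : Prop := forall n, f (u n) = u (n + 1)%Z.

Definition pseudo_orbit (delta : R -> R) (xs : Z -> R) : Prop :=
  forall n, Rabs (f (xs n) - xs (n + 1)%Z) < delta (f (xs n)).

Definition shadows (eps : R -> R) (xs : Z -> R) (x : R) : Prop :=
  forall n, Rabs (xs n - iterZ f g n x) < eps (xs n).

Lemma iterZ_is_orbit a : is_orbit (fun n => iterZ f g n a).
Proof. intro n. symmetry. apply iterZ_succ. Qed.

Lemma iterZ_pred_is_orbit b : is_orbit (fun n => iterZ f g (n - 1) b).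
Proof. intro n. rewrite <- iterZ_succ. f_equal. lia. Qed.

Definition splice (u v : Z -> R) (n : Z) : R := if (n <=? 0)%Z then u n else v n.

Lemma splice_nonpos u v n : (n <= 0)%Z -> splice u v n = u n.
Proof. intro Hn. unfold splice. rewrite (proj2 (Z.leb_le n 0) Hn). reflexivity. Qed.

Lemma splice_pos u v n : (0 < n)%Z -> splice u v n = v n.
Proof. intro Hn. unfold splice. rewrite (proj2 (Z.leb_gt n 0) Hn). reflexivity. Qed.

Lemma splice_pseudo_orbit u v delta : is_orbit u -> is_orbit v ->
  (forall y, 0 < delta y) -> Rabs (f (u 0%Z) - v 1%Z) < delta (f (u 0%Z)) ->
  pseudo_orbit delta (splice u v).
Proof.
  intros Hu Hv Hpos Hjump n.
  destruct (Z.lt_trichotomy n 0) as [Hn|[->|Hn]].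
  - rewrite !splice_nonpos by lia. rewrite Hu, Rminus_diag, Rabs_R0. apply Hpos.
  - exact Hjump.
  - rewrite !splice_pos by lia. rewrite Hv, Rminus_diag, Rabs_R0. apply Hpos.
Qed.

(* Pinning identifies both shadowing points with [a]; each of them then follows
   the orbit of [b] (shifted by one) on one half of the time line. *)
Lemma shadowed_splices_close eps a b x z : pins eps a ->
  shadows eps (splice (fun n => iterZ f g n a) (fun n => iterZ f g (n - 1) b)) x ->
  shadows eps (splice (fun n => iterZ f g (n - 1) b) (fun n => iterZ f g n a)) z ->
  forall k, Rabs (iterZ f g k b - iterZ f g k (f a)) < eps (iterZ f g k b).
Proof.
  intros Hpin Hx Hz.
  assert (Hxa : x = a).
  { apply Hpin. intro k. exists (- Z.of_nat k)%Z. split; [lia|].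
    specialize (Hx (- Z.of_nat k)%Z). rewrite splice_nonpos in Hx by lia. exact Hx. }
  assert (Hza : z = a).
  { apply Hpin. intro k. exists (Z.of_nat (S k)). split; [lia|].
    specialize (Hz (Z.of_nat (S k))). rewrite splice_pos in Hz by lia. exact Hz. }
  subst x z. intro k.
  replace (iterZ f g k (f a)) with (iterZ f g (k + 1) a) by (rewrite iterZ_add; reflexivity).
  replace (iterZ f g k b) with (iterZ f g (k + 1 - 1) b) by (f_equal; lia).
  destruct (Z.lt_ge_cases k 0) as [Hk|Hk].
  - specialize (Hz (k + 1)%Z). rewrite splice_nonpos in Hz by lia. exact Hz.
  - specialize (Hx (k + 1)%Z). rewrite splice_pos in Hx by lia. exact Hx.
Qed.

Lemma fixed_point_exists : expansive_TA f g -> shadowing_TA f g -> exists p, f p = p.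
Proof.
  intros [c [Hc Hexp]] Hshadow. apply NNPP. intro Hno.
  assert (Hnofix : forall y, f y <> y) by (intros y Hy; apply Hno; exists y; exact Hy).
  destruct (exists_pinning_eps 0 c (orbit_escapes 0 Hnofix) Hc)
    as [eps [Heps [Heps_c Hpin]]].
  destruct (Hshadow eps Heps) as [delta [Hdelta Hpseudo]].
  destruct (exists_near_point_within delta (f 0) Hdelta) as [b [Hb [Hjump1 Hjump2]]].
  pose proof (proj2 Hdelta) as Hdelta_pos.
  destruct (Hpseudo (splice (fun n => iterZ f g n 0) (fun n => iterZ f g (n - 1) b)))
    as [x Hx].
  { apply splice_pseudo_orbit; auto using iterZ_is_orbit, iterZ_pred_is_orbit.
    rewrite Rabs_minus_sym. exact Hjump1. }
  destruct (Hpseudo (splice (fun n => iterZ f g (n - 1) b) (fun n => iterZ f g n 0)))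
    as [z Hz].
  { apply splice_pseudo_orbit; auto using iterZ_is_orbit, iterZ_pred_is_orbit.
    simpl. rewrite fg. exact Hjump2. }
  destruct (Hexp b (f 0) Hb) as [k Hk].
  pose proof (shadowed_splices_close eps 0 b x z Hpin Hx Hz k).
  pose proof (Heps_c (iterZ f g k b)). lra.
Qed.

Lemma iterZ_near_at_bounded_times x r N : 0 < r -> exists d, 0 < d /\
  forall y, Rabs (y - x) < d -> forall k, (Z.abs k <= Z.of_nat N)%Z ->
    Rabs (iterZ f g k y - iterZ f g k x) < r.
Proof.
  intro Hr. induction N as [|N IH].
  - exists r. split; [exact Hr|]. intros y Hy k Hk. replace k with 0%Z by lia. exact Hy.
  - destruct IH as [d0 [Hd0 Hnear0]].
    destruct (continuity_pt_eps_delta _ _ (continuity_iterZ (Z.of_nat (S N)) x) r Hr)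
      as [d1 [Hd1 Hnear1]].
    destruct (continuity_pt_eps_delta _ _ (continuity_iterZ (- Z.of_nat (S N)) x) r Hr)
      as [d2 [Hd2 Hnear2]].
    exists (Rmin d0 (Rmin d1 d2)). split; [repeat apply Rmin_pos; assumption|].
    intros y Hy k Hk.
    pose proof (Rmin_l d0 (Rmin d1 d2)). pose proof (Rmin_r d0 (Rmin d1 d2)).
    pose proof (Rmin_l d1 d2). pose proof (Rmin_r d1 d2).
    destruct (Z.eq_dec k (Z.of_nat (S N))) as [->|Hk1]; [apply Hnear1; lra|].
    destruct (Z.eq_dec k (- Z.of_nat (S N))) as [->|Hk2]; [apply Hnear2; lra|].
    apply Hnear0; [lra| lia].
Qed.

Section Increasing.
Hypothesis f_incr : strict_increasing f.

Lemma iterZ_strict_increasing k : strict_increasing (iterZ f g k).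
Proof.
  pose proof (strict_increasing_inverse f g f_incr fg).
  destruct k; unfold iterZ;
    [intros x y Hxy; exact Hxy| apply Nat_iter_strict_increasing; assumption ..].
Qed.

Lemma orbit_steps_vanish x p q : (forall k, p <= iterZ f g k x <= q) ->
  forall r, 0 < r -> exists N : nat, forall k, (Z.of_nat N < Z.abs k)%Z ->
    Rabs (iterZ f g (k + 1) x - iterZ f g k x) < r.
Proof.
  intros Htrap r Hr.
  pose proof (strict_increasing_inverse f g f_incr fg) as g_incr.
  destruct (strict_increasing_bounded_iter_cauchy f x p q f_incr
    (fun j => ltac:(rewrite <- iterZ_of_nat; apply Htrap)) r Hr) as [N1 H1].
  destruct (strict_increasing_bounded_iter_cauchy g x p q g_incr
    (fun j => ltac:(rewrite <- iterZ_opp_of_nat; apply Htrap)) r Hr) as [N2 H2].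
  unfold Rdist in H1, H2.
  exists (Nat.max N1 (S N2)). intros k Hk.
  destruct (Z_of_nat_or_opp k) as [[|j] [-> | ->]]; try (simpl in Hk; lia).
  - replace (Z.of_nat (S j) + 1)%Z with (Z.of_nat (S (S j))) by lia.
    rewrite !iterZ_of_nat. apply H1; lia.
  - replace (- Z.of_nat (S j) + 1)%Z with (- Z.of_nat j)%Z by lia.
    rewrite !iterZ_opp_of_nat. apply H2; lia.
Qed.

Variable c : R -> R.
Hypothesis c_pos_cont : pos_cont_fun c.
Hypothesis c_expansive : forall x y, x <> y ->
  exists k, Rabs (iterZ f g k x - iterZ f g k y) > c (iterZ f g k x).

(* At large times the orbit of [y] lies between those of [x] and [f x], whose
   distance is a vanishing step of the orbit of [x]. *)
Lemma trapped_orbit_fixed x p q : (forall k, p <= iterZ f g k x <= q) -> f x = x.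
Proof.
  intros Htrap. apply NNPP. intro Hfx.
  destruct c_pos_cont as [Hc_cont Hc_pos].
  assert (Hpq : p <= q) by (specialize (Htrap 0%Z); simpl in Htrap; lra).
  destruct (continuity_ab_min c p q Hpq (fun y _ => Hc_cont y)) as [ym [Hym _]].
  assert (Hm : 0 < c ym) by apply Hc_pos.
  destruct (orbit_steps_vanish x p q Htrap (c ym) Hm) as [N HN].
  destruct (iterZ_near_at_bounded_times x (c ym) N Hm) as [d [Hd Hnear]].
  destruct (exists_small_fraction (f x - x) d Hd) as [s [Hs Hsd]].
  set (y := x + s * (f x - x)).
  assert (Hxy : x <> y).
  { unfold y. intro E. assert (Hprod : s * (f x - x) = 0) by lra.
    apply Rmult_integral in Hprod as [Hs0|Hfx0]; [lra| apply Hfx; lra]. }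
  destruct (c_expansive x y Hxy) as [k Hk].
  enough (Hclose : Rabs (iterZ f g k y - iterZ f g k x) < c ym).
  { rewrite Rabs_minus_sym in Hclose. pose proof (Hym _ (Htrap k)). lra. }
  destruct (Z_le_gt_dec (Z.abs k) (Z.of_nat N)) as [Hsmall|Hlarge].
  - apply Hnear; [|exact Hsmall]. unfold y. replace (x + s * (f x - x) - x) with (s * (f x - x)) by ring.
    exact Hsd.
  - eapply Rlt_trans; [| apply (HN k); lia].
    replace (iterZ f g (k + 1) x) with (iterZ f g k (f x)) by (rewrite iterZ_add; reflexivity).
    apply strict_increasing_image_closer; [apply iterZ_strict_increasing| congruence| lra].
Qed.

End Increasing.

Lemma fixed_points_not_ordered c : pos_cont_fun c ->
  (forall x y, x <> y -> exists k, Rabs (iterZ f g k x - iterZ f g k y) > c (iterZ f g k x)) ->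
  forall p q, f p = p -> f q = q -> ~ p < q.
Proof.
  intros Hc Hexp p q Hp Hq Hpq.
  assert (f_incr : strict_increasing f).
  { assert (f_inj : forall x y, f x = f y -> x = y)
      by (intros x y E; rewrite <- (gf x), <- (gf y), E; reflexivity).
    destruct (continuous_injective_monotone f f_cont f_inj) as [Hinc|Hdec]; [exact Hinc|].
    specialize (Hdec p q Hpq). lra. }
  assert (Hfixed : forall y, p <= y <= q -> f y = y).
  { intros y Hy. apply (trapped_orbit_fixed f_incr c Hc Hexp y p q). intro k.
    rewrite <- (iterZ_fixed k p Hp), <- (iterZ_fixed k q Hq).
    split; apply strict_increasing_le; try apply iterZ_strict_increasing; tauto. }
  set (y := p + Rmin (q - p) (c p) / 2).
  assert (Hmin : 0 < Rmin (q - p) (c p)) by (apply Rmin_pos; [lra| apply Hc]).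
  pose proof (Rmin_l (q - p) (c p)). pose proof (Rmin_r (q - p) (c p)).
  assert (Hy : f y = y) by (apply Hfixed; unfold y; lra).
  destruct (Hexp p y ltac:(unfold y; lra)) as [k Hk].
  rewrite !iterZ_fixed in Hk by assumption.
  unfold y in Hk. rewrite Rabs_minus_sym, Rabs_pos_eq in Hk by lra. lra.
Qed.

Lemma fixed_point_unique : expansive_TA f g -> forall p q, f p = p -> f q = q -> p = q.
Proof.
  intros [c [Hc Hexp]] p q Hp Hq.
  destruct (Rtotal_order p q) as [Hpq|[Heq|Hqp]]; [exfalso| exact Heq| exfalso].
  - exact (fixed_points_not_ordered c Hc Hexp p q Hp Hq Hpq).
  - exact (fixed_points_not_ordered c Hc Hexp q p Hq Hp Hqp).
Qed.

End Homeomorphism.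

Theorem mainTheorem15 (f g : R -> R)
  (Hhomeo : homeo_with_inverse f g)
  (HTA : topologically_anosov f g) :
  exists! p : R, f p = p.
Proof.
  destruct Hhomeo as (f_cont & g_cont & gf & fg).
  destruct HTA as [Hexp Hshadow].
  destruct (fixed_point_exists f g gf fg f_cont g_cont Hexp Hshadow) as [p Hp].
  exists p. split; [exact Hp|].
  intros q Hq. exact (fixed_point_unique f g gf fg f_cont g_cont Hexp p q Hp Hq).
Qed.
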